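(* Consider the following algorithm \textsc{$\ell_1$-Minimization} on input $A\in\mathbb{R}^{n\times m}$, a nonzero $b\in\mathbb{R}^n$ in the column span of $A$, $\epsilon>0$, $M>0$. Set $t=0$, $c^{(0)}=\mathbf{1}/m$, $t'=0$, $s=0\in\mathbb{R}^m$, $\Phi=0\in\mathbb{R}^n$. While $\|c^{(t)}\|_1\le 1+\frac{1}{(1+\epsilon)^2-1}$: (i) let $\phi^{(t)}=(A\mathbf{D}(c^{(t)})A^\top)^+b$ and $g^{(t)}=A^\top\phi^{(t)}/(b^\top\phi^{(t)})$; (ii) if $\|g^{(t)}\|_\infty\le m^{1/3}/M$, set $t'\leftarrow t'+1$, $s\leftarrow s+|g^{(t)}|$ (entrywise absolute value), $\Phi\leftarrow\Phi+\phi^{(t)}/(b^\top\phi^{(t)})$; (iii) if $t'\ge1$ and $\|s\|_\infty/t'\le\frac{1}{(1-\epsilon)M}$, return $\Phi/t'$; (iv) let $\alpha^{(t)}_i=1$ if $|g^{(t)}_i|\le\frac{1}{(1-\epsilon)M}$ and $\alpha^{(t)}_i=(g^{(t)}_i)^2M^2$ otherwise; (v) if $\alpha^{(t)}=\mathbf{1}$, return $\phi^{(t)}$; (vi) set $c^{(t+1)}_i=c^{(t)}_i\alpha^{(t)}_i$ for all $i$ and $t\leftarrow t+1$. When the while loop exits, return $x=\mathbf{D}(c^{(t)})A^\top(A\mathbf{D}(c^{(t)})A^\top)^+b$. Whenever this algorithm returns after the while loop exits, the final conductance vector $c=c^{(t)}$ satisfies \[ \frac{1}{\mathcal{E}_{\|c\|_1/c}(b)}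 \geq \frac{1}{(1+\epsilon)^2M^2}, \] where $\|c\|_1/c$ denotes the vector $(\|c\|_1/c_i)_i$ and, for positive $w\in\mathbb{R}^m$, $\mathcal{E}_{w}(b)=\min_{x:Ax=b}\sum_i w_i x_i^2$.
   Context: $\mathbf{1}$ is the all-ones vector; $\mathbf{D}(c)$ is the diagonal matrix with diagonal $c$; $L^+$ is the Moore–Penrose pseudoinverse. *)

From HB Require Import structures.
From mathcomp Require Import all_boot all_order all_algebra.
From mathcomp Require Import all_classical all_reals all_analysis.
Set Implicit Arguments. Unset Strict Implicit. Unset Printing Implicit Defensive.
Import Order.TTheory GRing.Theory Num.Theory.
Local Open Scope classical_set_scope.
Local Open Scope ring_scope.

(* Moore–Penrose pseudoinverse: the (unique) X satisfying the four Penrose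
   equations; chosen with xget (it exists for every real matrix). *)
Definition is_mpinv (R : realType) (p q : nat) (L : 'M[R]_(p, q)) (X : 'M[R]_(q, p)) : Prop :=
  [/\ L *m X *m L = L, X *m L *m X = X, (L *m X)^T = L *m X & (X *m L)^T = X *m L].

Definition mpinv (R : realType) (p q : nat) (L : 'M[R]_(p, q)) : 'M[R]_(q, p) :=
  xget 0 [set X | is_mpinv L X].

Definition norm1 (R : realType) (k : nat) (v : 'cV[R]_k) : R := \sum_i `|v i 0|.
Definition norminf (R : realType) (k : nat) (v : 'cV[R]_k) : R := \big[Num.max/0]_i `|v i 0|.

Section Algorithm.
Variables (R : realType) (n m : nat) (A : 'M[R]_(n, m)) (b : 'cV[R]_n) (eps M : R).

Definition Dc (c : 'cV[R]_m) : 'M[R]_m := diag_mx c^T.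
Definition phi (c : 'cV[R]_m) : 'cV[R]_n := mpinv (A *m Dc c *m A^T) *m b.
Definition bdot (v : 'cV[R]_n) : R := (b^T *m v) 0 0.
Definition gvec (c : 'cV[R]_m) : 'cV[R]_m := (bdot (phi c))^-1 *: (A^T *m phi c).

Definition loop_bound : R := 1 + ((1 + eps) ^+ 2 - 1)^-1.
Definition thr : R := ((1 - eps) * M)^-1.

Definition alpha (c : 'cV[R]_m) : 'cV[R]_m :=
  \col_i (if `|gvec c i 0| <= thr then 1 else (gvec c i 0) ^+ 2 * M ^+ 2).

Record state := St { st_c : 'cV[R]_m; st_tp : nat; st_s : 'cV[R]_m; st_Phi : 'cV[R]_n }.

(* body of the while loop: None = the algorithm returns inside the body
   (at step (iii) or (v)); Some st' = continue with state st'. *)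
Definition step (st : state) : option state :=
  let c := st_c st in
  let g := gvec c in
  let ph := phi c in
  let upd := norminf g <= powR (m%:R) (3%:R^-1) / M in
  let tp := if upd then (st_tp st).+1 else st_tp st in
  let s := if upd then st_s st + map_mx (fun x => `|x|) g else st_s st in
  let Phi := if upd then st_Phi st + (bdot ph)^-1 *: ph else st_Phi st in
  if (1 <= tp)%N && (norminf s / tp%:R <= thr) then None
  else if alpha c == const_mx 1 then None
  else Some (St (\col_i (c i 0 * alpha c i 0)) tp s Phi).

Definition init : state := St (const_mx (m%:R^-1)) 0 0 0.

(* run t = Some st iff the loop performed t full iterations (while condition
   true each time, no return inside the body), reaching state st. *)
Fixpoint run (t : nat) : option state :=
  match t with
  | 0 => Some init
  | t'.+1 => match run t' with
             | Some st => if norm1 (st_c st) <= loop_bound then step st else None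
             | None => None
             end
  end.

Definition energy (w : 'cV[R]_m) : R :=
  inf [set \sum_i w i 0 * (x i 0) ^+ 2 | x in [set x : 'cV[R]_m | A *m x = b]].

End Algorithm.

From HB Require Import structures.
From mathcomp Require Import all_boot all_order all_algebra.
From mathcomp Require Import all_classical all_reals all_analysis.
From mathcomp Require Import ring lra.
Import Order.TTheory GRing.Theory Num.Theory.
Set Implicit Arguments. Unset Strict Implicit. Unset Printing Implicit Defensive.
Local Open Scope ring_scope.

(* With conductances c > 0 and L = A D(c) A^T, the potential phi = L^+ b
   induces the electrical flow f = D(c) A^T phi, which routes b and, by
   Thomson's principle, minimises sum_i x_i^2 / c_i over all x with A x = b;
   the minimum is the effective resistance E(c) = b^T phi.  Hence the energy
   in the statement equals ||c||_1 E(c).  The multiplicative update keeps the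
   invariant (||c||_1 - 1) E(c) <= M^2: it is true initially (||c||_1 = 1),
   and one iteration changes ||c||_1 by M^2/E - M^2 D/E^2, where D is the
   energy of the old flow under the new conductances, an upper bound for the
   new resistance.  When the loop exits, ||c||_1 - 1 > 1/((1+eps)^2 - 1), and
   the invariant yields ||c||_1 E(c) <= (1+eps)^2 M^2. *)

Lemma mulmx_tr_self_eq0 (R : realDomainType) (p : nat) (u : 'rV[R]_p) :
  u *m u^T = 0 -> u = 0.
Proof.
move=> uu0; have sq0 : \sum_j u 0 j ^+ 2 = 0.
  have := congr1 (fun M : 'M[R]_1 => M 0 0) uu0; rewrite !mxE => sum0.
  by rewrite -[RHS]sum0; apply: eq_bigr => j _; rewrite !mxE expr2.
apply/rowP => j; rewrite mxE; apply/eqP; rewrite -sqrf_eq0; apply/eqP.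
by apply: (psumr_eq0P _ sq0) => // i _; exact: sqr_ge0.
Qed.

Lemma row_free_mul_tr_unit (R : realFieldType) (p q : nat) (G : 'M[R]_(p, q)) :
  row_free G -> G *m G^T \in unitmx.
Proof.
move=> freeG; rewrite -row_free_unit; apply: inj_row_free => v vGG0.
have vG0 : (v *m G) *m (v *m G)^T = 0.
  by rewrite trmx_mul mulmxA -(mulmxA v) vGG0 mul0mx.
by apply: (row_free_inj freeG); rewrite /= (mulmx_tr_self_eq0 vG0) mul0mx.
Qed.

Lemma mpinv_exists (R : realType) (p q : nat) (L : 'M[R]_(p, q)) :
  exists X, is_mpinv L X.
Proof.
have eL : L = col_base L *m row_base L by rewrite mulmx_base.
have uF : (col_base L)^T *m col_base L \in unitmx.
  rewrite -{2}[col_base L]trmxK; apply: row_free_mul_tr_unit.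
  by rewrite /row_free mxrank_tr; exact: col_base_full.
have uG := row_free_mul_tr_unit (row_base_free L).
move: (col_base L) (row_base L) eL uF uG => F G eL uF uG.
pose iF := invmx (F^T *m F); pose iG := invmx (G *m G^T).
exists (G^T *m iG *m iF *m F^T).
have LX : L *m (G^T *m iG *m iF *m F^T) = F *m iF *m F^T.
  by rewrite [L in L *m _]eL !mulmxA -(mulmxA F G G^T) mulmxK.
have XL : G^T *m iG *m iF *m F^T *m L = G^T *m iG *m G.
  by rewrite [L in _ *m L]eL !mulmxA -(mulmxA _ F^T F) mulmxKV.
have iFT : iF^T = iF by rewrite trmx_inv trmx_mul trmxK.
have iGT : iG^T = iG by rewrite trmx_inv trmx_mul trmxK.
split.
- by rewrite LX [X in _ *m X = _]eL !mulmxA -(mulmxA _ F^T F) mulmxKV // -eL.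
- by rewrite XL !mulmxA -(mulmxA _ G G^T) mulmxKV.
- by rewrite LX !trmx_mul trmxK iFT mulmxA.
- by rewrite XL !trmx_mul trmxK iGT mulmxA.
Qed.

Lemma mpinvP (R : realType) (p q : nat) (L : 'M[R]_(p, q)) : is_mpinv L (mpinv L).
Proof. exact: xgetPex (mpinv_exists L). Qed.

Lemma dot_colE (R : pzRingType) (k : nat) (u v : 'cV[R]_k) :
  (u^T *m v) 0 0 = \sum_i u i 0 * v i 0.
Proof. by rewrite mxE; apply: eq_bigr => i _; rewrite mxE. Qed.

Lemma Dc_mulE (R : realType) (m : nat) (c v : 'cV[R]_m) i :
  (Dc c *m v) i 0 = c i 0 * v i 0.
Proof. by rewrite /Dc mul_diag_mx !mxE. Qed.

Section Electrical.
Variables (R : realType) (n m : nat) (A : 'M[R]_(n, m)) (b : 'cV[R]_n).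
Hypothesis b_range : exists y, A *m y = b.

Definition posvec (c : 'cV[R]_m) := forall i, 0 < c i 0.
Definition laplacian (c : 'cV[R]_m) := A *m Dc c *m A^T.
Definition grad (c : 'cV[R]_m) := A^T *m phi A b c.
Definition flow (c : 'cV[R]_m) := Dc c *m grad c.
Definition eff_res (c : 'cV[R]_m) := bdot b (phi A b c).

Lemma gvecE c i : gvec A b c i 0 = (eff_res c)^-1 * grad c i 0.
Proof. by rewrite mxE. Qed.

Lemma norm1_posvec c : posvec c -> norm1 c = \sum_i c i 0.
Proof. by move=> pc; apply: eq_bigr => i _; rewrite ger0_norm // ltW. Qed.

Lemma weighted_sqr_sum_eq0 c (x : 'cV[R]_m) : posvec c ->
  \sum_i c i 0 * x i 0 ^+ 2 = 0 -> x = 0.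
Proof.
move=> pc sum0; apply/colP => i; rewrite mxE; apply/eqP.
have term_ge0 j : 0 <= c j 0 * x j 0 ^+ 2 by rewrite mulr_ge0 ?sqr_ge0 ?ltW.
have /eqP := psumr_eq0P (fun j _ => term_ge0 j) sum0 (i := i) isT.
by rewrite mulf_eq0 sqrf_eq0 gt_eqF.
Qed.

Lemma laplacian_quad c (v : 'cV[R]_n) :
  (v^T *m laplacian c *m v) 0 0 = \sum_i c i 0 * (A^T *m v) i 0 ^+ 2.
Proof.
have -> : v^T *m laplacian c *m v = (A^T *m v)^T *m (Dc c *m (A^T *m v)).
  by rewrite /laplacian trmx_mul trmxK !mulmxA.
by rewrite dot_colE; apply: eq_bigr => i _; rewrite Dc_mulE; ring.
Qed.

(* The residual v = b - L L^+ b is orthogonal to the range of L, hence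
   v^T L v = 0, so A^T v = 0; as b = A y, this gives v^T v = 0. *)
Lemma laplacian_phi c : posvec c -> laplacian c *m phi A b c = b.
Proof.
move=> pc; have [y Ay] := b_range.
have [LXL _ LX_sym _] := mpinvP (laplacian c).
set L := laplacian c; set X := mpinv L.
set v := b - L *m X *m b.
have vL0 : v^T *m L = 0.
  by rewrite /v linearB /= trmx_mul LX_sym mulmxBl -(mulmxA _ _ L) LXL subrr.
have ATv0 : A^T *m v = 0.
  apply: (weighted_sqr_sum_eq0 pc).
  by rewrite -laplacian_quad -/L vL0 mul0mx mxE.
have vv0 : v^T *m v = 0.
  rewrite {2}/v mulmxBr -{1}Ay mulmxA -(trmxK A) -trmx_mul ATv0 trmx0 mul0mx.
  by rewrite [v^T *m _]mulmxA [v^T *m _]mulmxA vL0 !mul0mx subrr.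
have /eqP : v = 0.
  by apply: trmx_inj; rewrite trmx0; apply: mulmx_tr_self_eq0; rewrite trmxK.
by rewrite subr_eq0 mulmxA => /eqP <-.
Qed.

Lemma flow_routes c : posvec c -> A *m flow c = b.
Proof. by move=> pc; rewrite -[RHS](laplacian_phi pc) /flow /grad !mulmxA. Qed.

Lemma eff_res_dot c y : A *m y = b -> eff_res c = \sum_i y i 0 * grad c i 0.
Proof. by move=> Ay; rewrite /eff_res /bdot -{1}Ay trmx_mul -mulmxA dot_colE. Qed.

Lemma eff_res_sum c : posvec c -> eff_res c = \sum_i c i 0 * grad c i 0 ^+ 2.
Proof.
move=> pc; rewrite (eff_res_dot c (flow_routes pc)).
by apply: eq_bigr => i _; rewrite Dc_mulE; ring.
Qed.

Lemma flow_energy c : posvec c -> \sum_i flow c i 0 ^+ 2 / c i 0 = eff_res c.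
Proof.
move=> pc; rewrite (eff_res_sum pc); apply: eq_bigr => i _.
by rewrite Dc_mulE; field; rewrite gt_eqF.
Qed.

(* Thomson's principle: termwise, y^2/c - (2 y h - c h^2) = (y - c h)^2 / c. *)
Lemma eff_res_le_energy c y : posvec c -> A *m y = b ->
  eff_res c <= \sum_i y i 0 ^+ 2 / c i 0.
Proof.
move=> pc Ay.
have -> : eff_res c = \sum_i (2 * (y i 0 * grad c i 0) - c i 0 * grad c i 0 ^+ 2).
  by rewrite sumrB -mulr_sumr -(eff_res_dot c Ay) -(eff_res_sum pc); ring.
apply: ler_sum => i _; rewrite -subr_ge0.
have -> : y i 0 ^+ 2 / c i 0
          - (2 * (y i 0 * grad c i 0) - c i 0 * grad c i 0 ^+ 2) =
    (y i 0 - c i 0 * grad c i 0) ^+ 2 / c i 0.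
  by field; rewrite gt_eqF.
by rewrite divr_ge0 ?sqr_ge0 ?ltW.
Qed.

Lemma eff_res_gt0 c : posvec c -> b != 0 -> 0 < eff_res c.
Proof.
move=> pc; apply: contraNT; rewrite -leNgt => res_le0.
have res0 : \sum_i c i 0 * grad c i 0 ^+ 2 = 0.
  apply/eqP; rewrite eq_le -(eff_res_sum pc) res_le0 (eff_res_sum pc).
  by apply: sumr_ge0 => i _; rewrite mulr_ge0 ?sqr_ge0 ?ltW.
by rewrite -(flow_routes pc) /flow (weighted_sqr_sum_eq0 pc res0) !mulmx0.
Qed.

Lemma energy_scaled_inv (k : R) c : 0 < k -> posvec c ->
  energy A b (\col_i (k / c i 0)) = k * eff_res c.
Proof.
move=> k0 pc; rewrite /energy; set X := (X in inf X).
have valE (x : 'cV[R]_m) :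
    \sum_i (\col_i (k / c i 0)) i 0 * x i 0 ^+ 2 = k * \sum_i x i 0 ^+ 2 / c i 0.
  by rewrite mulr_sumr; apply: eq_bigr => i _; rewrite mxE; ring.
have lbX : lbound X (k * eff_res c).
  by move=> _ [x /= Ax <-]; rewrite valE ler_pM2l // eff_res_le_energy.
have inX : X (k * eff_res c).
  by exists (flow c); [exact: flow_routes | rewrite valE flow_energy].
apply/le_anti/andP; split.
- by apply: (ge_inf _ inX); exists (k * eff_res c).
- by apply: lb_le_inf => //; exists (k * eff_res c).
Qed.

Lemma ncols_gt0 : b != 0 -> (0 < m)%N.
Proof.
have [y <-] := b_range; case: m A y => // A0 y; apply: contraNT => _.
by apply/eqP/colP => i; rewrite !mxE big_ord0.
Qed.

End Electrical.

Lemma update_bound (R : realFieldType) (K E D S S' E' : R) :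
  0 < K -> 0 < E -> 0 <= E' -> E' <= D -> (S - 1) * E <= K ->
  S' = S + K / E - K * D / E ^+ 2 -> (S' - 1) * E' <= K.
Proof.
move=> K0 E0 E'0 E'D SE ->; set u := E^-1.
have u0 : 0 < u by rewrite invr_gt0.
have Su : S - 1 <= K * u by rewrite -(ler_pM2r E0) -mulrA mulVf ?gt_eqF ?mulr1.
have -> : S + K / E - K * D / E ^+ 2 - 1 = S - 1 + K * u - K * D * u ^+ 2.
  by rewrite /u exprVn; ring.
set T := S - 1 + K * u - K * D * u ^+ 2.
have [T_le0 | T_gt0] := lerP T 0.
  exact: le_trans (mulr_le0_ge0 T_le0 E'0) (ltW K0).
have D0 : 0 <= D := le_trans E'0 E'D.
have TD : T * D <= K - K * (1 - D * u) ^+ 2.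
  have -> : K - K * (1 - D * u) ^+ 2 = (2 * K * u - K * D * u ^+ 2) * D by ring.
  by rewrite ler_wpM2r // /T; lra.
have : 0 <= K * (1 - D * u) ^+ 2 by rewrite mulr_ge0 ?sqr_ge0 ?ltW.
by move: (ler_wpM2l (ltW T_gt0) E'D); lra.
Qed.

Lemma exit_bound (R : realFieldType) (d K E S : R) :
  0 < d -> 0 < E -> 1 + d^-1 < S -> (S - 1) * E <= K -> S * E <= (1 + d) * K.
Proof.
move=> d0 E0 Sd SE.
have dS : 1 < d * (S - 1).
  by rewrite -[X in X < _](mulfV (lt0r_neq0 d0)) ltr_pM2l //; lra.
have E_lt : E < d * ((S - 1) * E) by rewrite mulrA -{1}(mul1r E) ltr_pM2r.
have : d * ((S - 1) * E) <= d * K by rewrite ler_pM2l.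
by lra.
Qed.

Section Invariant.
Variables (R : realType) (n m : nat) (A : 'M[R]_(n, m)) (b : 'cV[R]_n).
Variables eps M : R.
Hypotheses (b_range : exists y, A *m y = b) (b_neq0 : b != 0).
Hypotheses (eps_lt1 : eps < 1) (M_gt0 : 0 < M).

Definition next_c (c : 'cV[R]_m) := \col_i (c i 0 * alpha A b eps M c i 0).

Definition loop_invariant (c : 'cV[R]_m) :=
  posvec c /\ (norm1 c - 1) * eff_res A b c <= M ^+ 2.

Let thr_ge0 : 0 <= thr eps M.
Proof. by rewrite invr_ge0 mulr_ge0 // ?subr_ge0 ltW. Qed.

Lemma gvec_neq0 c i :
  (`|gvec A b c i 0| <= thr eps M) = false -> gvec A b c i 0 != 0.
Proof. by apply: contraFN => /eqP ->; rewrite normr0. Qed.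

Lemma alpha_gt0 c i : 0 < alpha A b eps M c i 0.
Proof.
rewrite mxE; case: ifP => // g_big.
have g_neq0 := gvec_neq0 g_big.
by apply: mulr_gt0; rewrite exprn_even_gt0 //= ?g_neq0 ?lt0r_neq0.
Qed.

(* When alpha_i <> 1, alpha_i = (M h_i / E)^2, so that
   flow_i^2 / next_c_i = c_i E^2 / M^2. *)
Lemma next_cB c i : posvec c -> 0 < eff_res A b c ->
  next_c c i 0 - c i 0 = M ^+ 2 / eff_res A b c ^+ 2 *
    (c i 0 * grad A b c i 0 ^+ 2 - flow A b c i 0 ^+ 2 / next_c c i 0).
Proof.
move=> pc E0; have ci := pc i; rewrite /flow Dc_mulE /next_c mxE /alpha mxE.
case: ifP => [_ | g_big]; first by field; rewrite !lt0r_neq0.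
have g_neq0 := gvec_neq0 g_big.
have h_neq0 : grad A b c i 0 != 0.
  by move: g_neq0; rewrite gvecE mulf_eq0 negb_or => /andP[].
by rewrite gvecE; field; rewrite h_neq0 !gt_eqF.
Qed.

Lemma loop_invariant_next c : loop_invariant c -> loop_invariant (next_c c).
Proof.
move=> [pc cE]; set E := eff_res A b c; set K := M ^+ 2.
have E0 : 0 < E by exact: eff_res_gt0.
have pc' : posvec (next_c c) by move=> i; rewrite mxE mulr_gt0 ?alpha_gt0.
split => //.
pose D := \sum_i flow A b c i 0 ^+ 2 / next_c c i 0.
apply: (update_bound (D := D) _ E0 _ _ cE) => //.
- by rewrite exprn_gt0.
- exact: ltW (eff_res_gt0 b_range pc' b_neq0).
- exact: eff_res_le_energy pc' (flow_routes b_range pc).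
- rewrite !norm1_posvec // -[\sum_i next_c c i 0](subrK (\sum_i c i 0)) -sumrB.
  rewrite (eq_bigr _ (fun i _ => next_cB i pc E0)) -mulr_sumr sumrB.
  rewrite -(eff_res_sum b_range pc) -/E -/D.
  by field; rewrite gt_eqF.
Qed.

Lemma loop_invariant_init : loop_invariant (const_mx m%:R^-1).
Proof.
have m0 : (0 < m)%N := ncols_gt0 b_range b_neq0.
have pc : posvec (const_mx m%:R^-1 : 'cV[R]_m).
  by move=> i; rewrite mxE invr_gt0 ltr0n.
split => //; rewrite norm1_posvec //.
under eq_bigr do rewrite mxE.
rewrite sumr_const card_ord -[_ *+ m]mulr_natr mulVf ?pnatr_eq0 -?lt0n //.
by rewrite subrr mul0r exprn_ge0 // ltW.
Qed.

Lemma loop_invariant_run T st :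
  run A b eps M T = Some st -> loop_invariant (st_c st).
Proof.
elim: T st => [|T IH] st /=; first by move=> [<-]; exact: loop_invariant_init.
case Hr: (run A b eps M T) => [st0|] //; case: ifP => // _.
rewrite /step; case: ifP => // _; case: ifP => // _ [<-].
exact: loop_invariant_next (IH _ Hr).
Qed.

End Invariant.

Theorem lemma4p7 (R : realType) (n m : nat) (A : 'M[R]_(n, m)) (b : 'cV[R]_n)
  (eps M : R) (T : nat) (st : state R n m) :
  b != 0 -> (exists x : 'cV[R]_m, A *m x = b) ->
  0 < eps -> eps < 1 -> 0 < M ->
  run A b eps M T = Some st ->
  ~~ (norm1 (st_c st) <= loop_bound eps) ->
  ((1 + eps) ^+ 2 * M ^+ 2)^-1
    <= (energy A b (\col_i (norm1 (st_c st) / st_c st i 0)))^-1.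
Proof.
move=> b_neq0 b_range eps_gt0 eps_lt1 M_gt0 ran.
have [pc cE] := loop_invariant_run b_range b_neq0 eps_lt1 M_gt0 ran.
move: (st_c st) pc cE => c pc cE; rewrite -ltNge /loop_bound => c_big.
set d := (1 + eps) ^+ 2 - 1.
have d0 : 0 < d by rewrite /d; nra.
have S0 : 0 < norm1 c by apply: lt_trans c_big; rewrite ltr_wpDr ?invr_ge0 ?ltW.
have E0 := eff_res_gt0 b_range pc b_neq0.
rewrite energy_scaled_inv // lef_pV2 ?posrE ?mulr_gt0 ?exprn_gt0 ?addr_gt0 //.
have -> : (1 + eps) ^+ 2 = 1 + d by rewrite /d; ring.
exact: exit_bound.
Qed.
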